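(* Let $X$ and $Y$ be slices that are jointly spacelike (i.e. $X\cup Y$ is spacelike) and satisfy $X\cap Y=\varnothing$. Then the product and the coproduct of $X$ and $Y$ exist in $\mathsf{Slice}$, and both are given by the set-theoretic union $X\cup Y$.
   Context: Fix a connected, time-orientable Lorentzian manifold $\mathcal{M}$ with a fixed time-orientation (no further causality assumptions; closed timelike curves may exist). A causal curve is an equivalence class, up to monotone reparametrisation, of smooth regular paths $\mu:\iota\to\mathcal{M}$ ($\iota\subseteq\mathbb{R}$ an interval) whose tangent is everywhere timelike or null; it is future-directed if the tangent is everywhere future-directed. Write $x\prec y$ if $x=y$ or there is a future-directed causal curve from $x$ to $y$. A region $A\subseteq\mathcal{M}$ is spacelike if no two distinct points $x,y\in A$ satisfy $x\prec y$. A slice is a closed spacelike subset of $\mathcal{M}$; slices $X,Y$ are jointly spacelike if $X\cup Y$ is spacelike. For regions $A,B$, $\mathcal{C}[A,B]$ is the set of future-directed causal curves passing through $A$ and then $B$: for a representative path $\mu:\iota\to\mathcal{M}$, there exists $q\in\iota$ with $\mu(q)\in B$, and for every such $q$ there exists $p\le q$ with $\mu(p)\in A$. Write $\mathcal{C}[A]:=\mathcal{C}[A,A]$. The category $\mathsf{Slice}$ has slices as objects, $\mathsf{Slice}(X,Y)=\mathcal{P}(\mathcal{C}[X,Y])$ (the powerset), composition $T\circ S:=T\cap S$, and identities $1_X=\mathcal{C}[X,X]$. *)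

From HB Require Import structures.
From mathcomp Require Import all_boot all_order all_algebra.
From mathcomp Require Import all_classical all_reals.
From mathcomp Require Import topology normedtype derive.
Set Implicit Arguments. Unset Strict Implicit. Unset Printing Implicit Defensive.
Import Order.TTheory GRing.Theory Num.Theory.
Import numFieldNormedType.Exports.
Local Open Scope classical_set_scope.
Local Open Scope ring_scope.

Section Smooth.
Variables (R : realType) (V W : normedModType R).

Fixpoint iterD (vs : seq V) (f : V -> W) : V -> W :=
  if vs is v :: vs' then fun x => 'D_v (iterD vs' f) x else f.

Definition smooth_on (U : set V) (f : V -> W) : Prop :=
  forall vs : seq V,
    (forall x, U x -> {for x, continuous (iterD vs f)}) /\
    (forall v x, U x -> derivable (iterD vs f) x v).
End Smooth.

Record chart (R : realType) (M : Type) (d : nat) := Chart {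
  cdom : set M;
  cmap : M -> 'rV[R]_d;
  cinv : 'rV[R]_d -> M
}.

Section Spacetime.
Variables (R : realType) (M : topologicalType) (n : nat).
Notation d := n.+1.
Notation E := 'rV[R]_d.

Definition cimg (c : chart R M d) : set E := cmap c @` cdom c.

Definition is_chart (c : chart R M d) : Prop :=
  [/\ open (cdom c), open (cimg c),
      (forall x, cdom c x -> cinv c (cmap c x) = x),
      (forall y, cimg c y -> (cdom c (cinv c y) /\ cmap c (cinv c y) = y)) &
      {within cdom c, continuous (cmap c)} /\
      {within cimg c, continuous (cinv c)}].

Definition trans (c c' : chart R M d) : E -> E := cmap c' \o cinv c.
Definition overlap (c c' : chart R M d) : set E := cmap c @` (cdom c `&` cdom c').

(* Jacobian (row-vector convention: the differential is v |-> v *m J) *)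
Definition jacobian (f : E -> E) (x : E) : 'M[R]_d :=
  \matrix_(i < d, j < d) ('D_(delta_mx 0 i : E) f x) 0 j.

Definition bil (G : 'M[R]_d) (u v : E) : R := (u *m G *m v^T) 0 0.

Definition minkowski : 'M[R]_d :=
  diag_mx (\row_(i < d) (if i == ord0 then -1 else 1)).

(* A time-oriented Lorentzian manifold of dimension n+1:
   - M a connected, Hausdorff, second countable space,
   - a smooth atlas,
   - the metric given by its components in each chart (smooth, symmetric,
     of Lorentzian signature), transforming as a (0,2)-tensor,
   - a continuous timelike vector field (the fixed time-orientation),
     given by its components in each chart, transforming as a vector. *)
Record spacetime := Spacetime {
  atlas : set (chart R M d);
  metric : chart R M d -> E -> 'M[R]_d;
  timef : chart R M d -> E -> E
}.

Definition is_spacetime (S : spacetime) : Prop :=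
  [/\ [/\ hausdorff_space M, second_countable (T := M) & connected [set: M]],
    (forall c, atlas S c -> is_chart c),
    (forall x : M, exists2 c, atlas S c & cdom c x) /\
    (forall c c', atlas S c -> atlas S c' -> smooth_on (overlap c c') (trans c c')),
    (forall c, atlas S c ->
       smooth_on (cimg c) (metric S c) /\
       forall y, cimg c y ->
         (metric S c y)^T = metric S c y /\
         exists2 P : 'M[R]_d, P \in unitmx & P^T *m metric S c y *m P = minkowski) &
    (forall c c' y, atlas S c -> atlas S c' -> overlap c c' y ->
       metric S c y =
         jacobian (trans c c') y *m metric S c' (trans c c' y) *m (jacobian (trans c c') y)^T) /\
    (forall c, atlas S c ->
       {within cimg c, continuous (timef S c)} /\
       (forall y, cimg c y -> bil (metric S c y) (timef S c y) (timef S c y) < 0) /\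
       (forall c' y, atlas S c' -> overlap c c' y ->
          timef S c' (trans c c' y) = timef S c y *m jacobian (trans c c') y))].

(* only the values on [pdom] matter for the curve, smoothness on the   *)
(* interval (including endpoints) is expressed as smoothness on an     *)
(* open neighbourhood of it.                                           *)
Record path := Path { pdom : set R; pmap : R -> M }.

Variable S : spacetime.

Definition tangent (c : chart R M d) (p : path) (t : R) : E :=
  'D_1 (cmap c \o pmap p) t.

Definition fd_causal_path (p : path) : Prop :=
  is_interval (pdom p) /\
  (exists O : set R, [/\ open O, pdom p `<=` O &
     forall t c, O t -> atlas S c -> cdom c (pmap p t) ->
       exists2 e : R, 0 < e &
         (forall s, ball t e s -> cdom c (pmap p s)) /\
         smooth_on (ball t e) (cmap c \o pmap p)]) /\
  (forall t c, pdom p t -> atlas S c -> cdom c (pmap p t) ->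
     let y := cmap c (pmap p t) in
     let v := tangent c p t in
     [/\ v != 0,
         bil (metric S c y) v v <= 0 &
         bil (metric S c y) v (timef S c y) < 0]).

(* equality of causal curves: monotone (increasing, smooth, with positive
   derivative) reparametrisation *)
Definition reparam (p q : path) : Prop :=
  exists phi : R -> R,
   [/\ (exists2 O : set R, open O /\ pdom q `<=` O & smooth_on O phi),
       (forall s, pdom q s -> pdom p (phi s) /\ 0 < 'D_1 phi s),
       (forall t, pdom p t -> exists2 s, pdom q s & phi s = t),
       (forall s1 s2, pdom q s1 -> pdom q s2 -> s1 < s2 -> phi s1 < phi s2) &
       (forall s, pdom q s -> pmap q s = pmap p (phi s))].

Definition curve_eq (p q : path) : Prop :=
  fd_causal_path p /\ fd_causal_path q /\ (reparam p q \/ reparam q p).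

(* a set of paths representing a set of causal curves *)
Definition saturated (A : set path) : Prop :=
  forall p q, curve_eq p q -> A p -> A q.

Definition causal_le (x y : M) : Prop :=
  x = y \/ exists p a b, [/\ fd_causal_path p, pdom p a, pdom p b, a <= b &
                             pmap p a = x /\ pmap p b = y].

Definition spacelike (A : set M) : Prop :=
  forall x y, A x -> A y -> x <> y -> ~ causal_le x y.

Definition slice (A : set M) : Prop := closed A /\ spacelike A.

Definition Ccurves (A B : set M) : set path :=
  [set p | [/\ fd_causal_path p,
     (exists2 q, pdom p q & B (pmap p q)) &
     (forall q, pdom p q -> B (pmap p q) ->
        exists2 r, pdom p r & r <= q /\ A (pmap p r))]].

(* the category Slice: Hom(X,Y) = subsets of C[X,Y] (saturated sets of
   representative paths = sets of curves); composition T o S := T `&` S;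
   identity 1_X := C[X,X]. *)
Definition Hom (X Y : set M) (F : set path) : Prop :=
  F `<=` Ccurves X Y /\ saturated F.

Definition comp (T F : set path) : set path := T `&` F.

Definition is_product (X Y P : set M) : Prop :=
  slice P /\
  exists piX piY, [/\ Hom P X piX, Hom P Y piY &
    forall Z f g, slice Z -> Hom Z X f -> Hom Z Y g ->
      exists! h, Hom Z P h /\ comp piX h = f /\ comp piY h = g].

Definition is_coproduct (X Y P : set M) : Prop :=
  slice P /\
  exists iX iY, [/\ Hom X P iX, Hom Y P iY &
    forall Z f g, slice Z -> Hom X Z f -> Hom Y Z g ->
      exists! h, Hom P Z h /\ comp h iX = f /\ comp h iY = g].

End Spacetime.

From Pilot Require Import Defs.
From HB Require Import structures.
From mathcomp Require Import all_boot all_order all_algebra.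
From mathcomp Require Import all_classical all_reals.
From mathcomp Require Import topology normedtype derive.
Import Order.TTheory.
Set Implicit Arguments. Unset Strict Implicit. Unset Printing Implicit Defensive.
Local Open Scope classical_set_scope.

(* A causal curve meets a spacelike set in at most one point. So when X `|` Y
   is spacelike, C[X `|` Y, X] and C[X, X `|` Y] both consist of the curves
   meeting X, no curve meets both X and Y, and a morphism into or out of
   X `|` Y is the union of its X-part and its Y-part, which are its composites
   with these projections resp. injections. *)

Lemma setIUr_disjoint (T : Type) (A B f g : set T) :
  A `&` B = set0 -> f `<=` A -> g `<=` B -> A `&` (f `|` g) = f.
Proof.
move=> AB0 fA gB; rewrite setIUr (setIidr fA).
have -> : A `&` g = set0 by rewrite -subset0 -AB0; exact: setIS.
exact: setU0.
Qed.

Lemma setUI_disjoint (T : Type) (A B f g : set T) :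
  A `&` B = set0 -> f `<=` A -> g `<=` B -> (f `|` g) `&` A = f.
Proof. by move=> AB0 fA gB; rewrite setIC; exact: setIUr_disjoint AB0 fA gB. Qed.

Section SliceCategory.
Variables (R : realType) (M : topologicalType) (n : nat) (S : spacetime R M n).
Implicit Types (A B X Y Z : set M) (f g h : set (Defs.path R M)).

Definition meets A : set (Defs.path R M) :=
  [set p | fd_causal_path S p /\ exists2 t, Defs.pdom p t & A (Defs.pmap p t)].

Lemma spacelike_path_eq A p s t :
  spacelike S A -> fd_causal_path S p -> Defs.pdom p s -> Defs.pdom p t ->
  A (Defs.pmap p s) -> A (Defs.pmap p t) -> Defs.pmap p s = Defs.pmap p t.
Proof.
move=> spA fp ds dt As At; apply: contrapT => neq.
have [st|ts] := leP s t.
- by apply: (spA _ _ As At neq); right; exists p, s, t.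
- apply: (spA _ _ At As (nesym neq)); right; exists p, t, s.
  by split => //; exact: ltW.
Qed.

Lemma meets_saturated A : saturated S (meets A).
Proof.
move=> p q [_ [fq [[phi [_ phiP phi_onto _ qE]] | [phi [_ phiP _ _ pE]]]]].
- move=> [_ [t dt At]]; split => //.
  by have [s ds st] := phi_onto t dt; exists s; rewrite // qE // st.
- move=> [_ [t dt At]]; split => //.
  by exists (phi t); [exact: (phiP t dt).1 | rewrite -pE].
Qed.

Lemma meetsU A B : meets (A `|` B) = meets A `|` meets B.
Proof.
apply/seteqP; split => p.
- by move=> [fp [t dt [At|Bt]]]; [left|right]; split => //; exists t.
- by move=> [] [fp [t dt ABt]]; split => //; exists t => //; [left|right].
Qed.

Lemma meets_disjoint X Y :
  spacelike S (X `|` Y) -> X `&` Y = set0 -> meets X `&` meets Y = set0.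
Proof.
move=> spXY XY0; rewrite -subset0 => p [[fp [s ds Xs]] [_ [t dt Yt]]].
have st := spacelike_path_eq spXY fp ds dt (or_introl Xs) (or_intror Yt).
suff : (X `&` Y) (Defs.pmap p t) by rewrite XY0.
by split => //; rewrite -st.
Qed.

Lemma Ccurves_meetsl A B : Ccurves S A B `<=` meets A.
Proof.
move=> p [fp [t dt Bt] Aprev]; split => //.
by have [s ds [_ As]] := Aprev t dt Bt; exists s.
Qed.

Lemma Ccurves_meetsr A B : Ccurves S A B `<=` meets B.
Proof. by move=> p [fp Bp _]; split. Qed.

Lemma Ccurves_sub_meets A B : B `<=` A -> Ccurves S A B = meets B.
Proof.
move=> BA; apply/seteqP; split; first exact: Ccurves_meetsr.
move=> p [fp Bp]; split => // t dt Bt.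
by exists t => //; split; [exact: lexx | exact: BA].
Qed.

Lemma Ccurves_spacelike_meets A B :
  spacelike S B -> A `<=` B -> Ccurves S A B = meets A.
Proof.
move=> spB AB; apply/seteqP; split; first exact: Ccurves_meetsl.
move=> p [fp [s ds As]]; split => //; first by exists s => //; exact: AB.
move=> t dt Bt; exists t => //; split; first exact: lexx.
by rewrite -(spacelike_path_eq spB fp ds dt (AB _ As) Bt).
Qed.

Lemma Ccurves_subl A A' B : A `<=` A' -> Ccurves S A B `<=` Ccurves S A' B.
Proof.
move=> AA' p [fp Bp Aprev]; split => // t dt Bt.
by have [s ds [st As]] := Aprev t dt Bt; exists s => //; split => //; exact: AA'.
Qed.

Lemma Ccurves_setUr A X Y p :
  Ccurves S A X p -> ~ meets Y p -> Ccurves S A (X `|` Y) p.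
Proof.
move=> [fp [s ds Xs] Aprev] nYp; split => //; first by exists s => //; left.
move=> t dt [Xt|Yt]; first exact: Aprev.
by case: nYp; split => //; exists t.
Qed.

Lemma saturatedU f g : saturated S f -> saturated S g -> saturated S (f `|` g).
Proof. by move=> fS gS p q pq [fp|gp]; [left; exact: fS pq fp | right; exact: gS pq gp]. Qed.

Lemma Hom_meetsr Z X f : Defs.Hom S Z X f -> f `<=` meets X.
Proof. by move=> [fC _] p /fC /Ccurves_meetsr. Qed.

Lemma Hom_meetsl X Z f : Defs.Hom S X Z f -> f `<=` meets X.
Proof. by move=> [fC _] p /fC /Ccurves_meetsl. Qed.

Lemma Hom_setUr Z X Y f g :
  meets X `&` meets Y = set0 ->
  Defs.Hom S Z X f -> Defs.Hom S Z Y g -> Defs.Hom S Z (X `|` Y) (f `|` g).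
Proof.
move=> XY0 fH gH; split; last exact: saturatedU fH.2 gH.2.
move=> p [fp|gp].
- apply: Ccurves_setUr; first exact: fH.1.
  move=> Yp; suff : (meets X `&` meets Y) p by rewrite XY0.
  by split => //; exact: Hom_meetsr fH _ fp.
- rewrite setUC; apply: Ccurves_setUr; first exact: gH.1.
  move=> Xp; suff : (meets X `&` meets Y) p by rewrite XY0.
  by split => //; exact: Hom_meetsr gH _ gp.
Qed.

Lemma Hom_setUl X Y Z f g :
  Defs.Hom S X Z f -> Defs.Hom S Y Z g -> Defs.Hom S (X `|` Y) Z (f `|` g).
Proof.
move=> fH gH; split; last exact: saturatedU fH.2 gH.2.
move=> p [fp|gp].
- exact: Ccurves_subl (@subsetUl _ X Y) _ (fH.1 _ fp).
- exact: Ccurves_subl (@subsetUr _ X Y) _ (gH.1 _ gp).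
Qed.

Lemma slice_setU X Y : slice S X -> slice S Y -> spacelike S (X `|` Y) ->
  slice S (X `|` Y).
Proof. by move=> [cX _] [cY _] spXY; split => //; exact: closedU. Qed.

Lemma is_product_setU X Y :
  slice S (X `|` Y) -> X `&` Y = set0 -> is_product S X Y (X `|` Y).
Proof.
move=> slXY XY0; have mXY0 := meets_disjoint slXY.2 XY0.
have mYX0 : meets Y `&` meets X = set0 by rewrite setIC.
split => //; exists (meets X), (meets Y); split.
- by split; [rewrite Ccurves_sub_meets //; exact: subsetUl | exact: meets_saturated].
- by split; [rewrite Ccurves_sub_meets //; exact: subsetUr | exact: meets_saturated].
move=> Z f g _ fH gH; exists (f `|` g); split.
  split; first exact: Hom_setUr mXY0 fH gH.
  split; first exact: setIUr_disjoint mXY0 (Hom_meetsr fH) (Hom_meetsr gH).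
  by rewrite setUC; exact: setIUr_disjoint mYX0 (Hom_meetsr gH) (Hom_meetsr fH).
move=> h [hH [<- <-]]; rewrite /Defs.comp -setIUl setIidr //.
by rewrite -meetsU; exact: Hom_meetsr hH.
Qed.

Lemma is_coproduct_setU X Y :
  slice S (X `|` Y) -> X `&` Y = set0 -> is_coproduct S X Y (X `|` Y).
Proof.
move=> slXY XY0; have mXY0 := meets_disjoint slXY.2 XY0.
have mYX0 : meets Y `&` meets X = set0 by rewrite setIC.
split => //; exists (meets X), (meets Y); split.
- split; last exact: meets_saturated.
  by rewrite (Ccurves_spacelike_meets slXY.2 (@subsetUl _ X Y)).
- split; last exact: meets_saturated.
  by rewrite (Ccurves_spacelike_meets slXY.2 (@subsetUr _ X Y)).
move=> Z f g _ fH gH; exists (f `|` g); split.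
  split; first exact: Hom_setUl.
  split; first exact: setUI_disjoint mXY0 (Hom_meetsl fH) (Hom_meetsl gH).
  by rewrite setUC; exact: setUI_disjoint mYX0 (Hom_meetsl gH) (Hom_meetsl fH).
move=> h [hH [<- <-]]; rewrite /Defs.comp -setIUr setIidl //.
by rewrite -meetsU; exact: Hom_meetsl hH.
Qed.

End SliceCategory.

Theorem mainTheorem2 (R : realType) (M : topologicalType) (n : nat)
  (S : spacetime R M n) (HS : is_spacetime S) (X Y : set M) :
  slice S X -> slice S Y -> spacelike S (X `|` Y) -> X `&` Y = set0 ->
  is_product S X Y (X `|` Y) /\ is_coproduct S X Y (X `|` Y).
Proof.
move=> slX slY spXY XY0; have slXY := slice_setU slX slY spXY.
by split; [exact: is_product_setU | exact: is_coproduct_setU].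
Qed.
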